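(* Let $A$ be a non-empty set and let $\phi:\ell_\infty(A)\to\mathbb R$ be a linear functional. Define $g_\phi:\ell_\infty(A)\to\mathbb R_+$ by $g_\phi(x^* )=|\phi(|x^*|)|$. Then $g_\phi\in H[\ell_1(A)]_+$ and $\|g_\phi\|_{FBL[\ell_1(A)]}=\sup\{|\phi(x^* )|:x^*\in B_{\ell_\infty(A)}\}$.
   Context: Identify $\ell_1(A)^*$ with $\ell_\infty(A)$. $H[\ell_1(A)]$ is the vector space of positively homogeneous functions $f:\ell_\infty(A)\to\mathbb R$ ($f(\lambda x^* )=\lambda f(x^* )$ for $\lambda>0$), ordered pointwise, with nonnegative cone $H[\ell_1(A)]_+$. For $f\in H[\ell_1(A)]$, $\|f\|_{FBL[\ell_1(A)]}:=\sup\{\sum_{k=1}^n|f(x_k^* )| : n\in\mathbb N,\ x_1^*,\dots,x_n^*\in\ell_\infty(A),\ \sup_{a\in A}\sum_{k=1}^n|x_k^*(a)|\le1\}\in[0,\infty]$. *)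

From mathcomp Require Import all_boot all_order all_algebra.
From mathcomp Require Import all_classical all_reals all_analysis.
Set Implicit Arguments. Unset Strict Implicit. Unset Printing Implicit Defensive.
Import Order.TTheory GRing.Theory Num.Theory.
Local Open Scope classical_set_scope.
Local Open Scope ring_scope.

(* l_infty(A) is encoded as the bounded functions A -> R. *)
Definition linf_bounded (R : realType) (A : Type) (x : A -> R) : Prop :=
  exists M : R, forall a, `|x a| <= M.

Definition linear_on_linf (R : realType) (A : Type) (phi : (A -> R) -> R) : Prop :=
  forall (x y : A -> R) (s t : R), linf_bounded x -> linf_bounded y ->
    phi (fun a => s * x a + t * y a) = s * phi x + t * phi y.

Definition linf_abs (R : realType) (A : Type) (x : A -> R) : A -> R :=
  fun a => `|x a|.

Definition g_phi (R : realType) (A : Type) (phi : (A -> R) -> R) : (A -> R) -> R :=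
  fun x => `| phi (linf_abs x) |.

Definition pos_homogeneous (R : realType) (A : Type) (f : (A -> R) -> R) : Prop :=
  forall (x : A -> R) (l : R), linf_bounded x -> 0 < l ->
    f (fun a => l * x a) = l * f x.

Definition in_H_plus (R : realType) (A : Type) (f : (A -> R) -> R) : Prop :=
  pos_homogeneous f /\ (forall x : A -> R, linf_bounded x -> 0 <= f x).

Definition fbl_norm (R : realType) (A : Type) (f : (A -> R) -> R) : \bar R :=
  ereal_sup [set e : \bar R | exists (n : nat) (xs : 'I_n -> A -> R),
      [/\ (0 < n)%N, (forall k, linf_bounded (xs k)),
          (forall a : A, \sum_(k < n) `|xs k a| <= 1) &
          e = (\sum_(k < n) `|f (xs k)|)%:E]].

Definition sup_ball (R : realType) (A : Type) (phi : (A -> R) -> R) : \bar R :=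
  ereal_sup [set e : \bar R | exists x : A -> R,
      [/\ linf_bounded x, (forall a, `|x a| <= 1) & e = (`| phi x |)%:E]].

From mathcomp Require Import all_boot all_order all_algebra.
From mathcomp Require Import all_classical all_reals all_analysis.
From mathcomp Require Import lra.
Set Implicit Arguments. Unset Strict Implicit. Unset Printing Implicit Defensive.
Import Order.TTheory GRing.Theory Num.Theory.
Local Open Scope classical_set_scope.
Local Open Scope ring_scope.

(* Both inequalities come from the linearity of phi.  Given a family
   (x_k) with sum_k |x_k| <= 1, the signed combination
   y = sum_k sg(phi |x_k|) |x_k| lies in the unit ball and
   phi y = sum_k g_phi(x_k).  Conversely, for x in the unit ball, the
   positive and negative parts x^+, x^- form an admissible pair and
   |phi x| = |phi x^+ - phi x^-| <= g_phi(x^+) + g_phi(x^-). *)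

Section Linf.
Variables (R : realType) (A : Type).
Implicit Types (x y : A -> R).

Lemma linf_bounded_comb s t x y : linf_bounded x -> linf_bounded y ->
  linf_bounded (fun a => s * x a + t * y a).
Proof.
move=> [M hM] [N hN]; exists (`|s| * M + `|t| * N) => a.
apply: (le_trans (ler_normD _ _)); rewrite !normrM.
by apply: lerD; apply: ler_wpM2l.
Qed.

Lemma linf_bounded0 : linf_bounded (fun _ : A => 0 : R).
Proof. by exists 0 => a; rewrite normr0. Qed.

Lemma linf_bounded_abs x : linf_bounded x -> linf_bounded (linf_abs x).
Proof. by move=> [M hM]; exists M => a; rewrite /linf_abs normr_id. Qed.

Lemma linf_abs_id x : (forall a, 0 <= x a) -> linf_abs x = x.
Proof. by move=> x_ge0; apply: funext => a; rewrite /linf_abs ger0_norm. Qed.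

Lemma lincomb_ord_recl n (xs : 'I_n.+1 -> A -> R) (c : 'I_n.+1 -> R) :
  (fun a => \sum_(k < n.+1) c k * xs k a) =
  (fun a => c ord0 * xs ord0 a +
            1 * \sum_(k < n) c (lift ord0 k) * xs (lift ord0 k) a).
Proof. by apply: funext => a; rewrite big_ord_recl mul1r. Qed.

Lemma linf_bounded_lincomb n (xs : 'I_n -> A -> R) (c : 'I_n -> R) :
  (forall k, linf_bounded (xs k)) ->
  linf_bounded (fun a => \sum_(k < n) c k * xs k a).
Proof.
elim: n xs c => [|n IH] xs c xs_bd.
  by under [X in linf_bounded X]funext do rewrite big_ord0; exact: linf_bounded0.
by rewrite lincomb_ord_recl; apply: linf_bounded_comb => //; apply: IH.
Qed.

Definition linf_pos x : A -> R := fun a => (`|x a| + x a) / 2.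
Definition linf_neg x : A -> R := fun a => (`|x a| - x a) / 2.

Lemma linf_pos_ge0 x a : 0 <= linf_pos x a.
Proof. by rewrite /linf_pos divr_ge0 // -lerBlDr sub0r ler_normr lexx orbT. Qed.

Lemma linf_neg_ge0 x a : 0 <= linf_neg x a.
Proof. by rewrite /linf_neg divr_ge0 // subr_ge0 ler_norm. Qed.

Lemma linf_pos_bounded x : linf_bounded x -> linf_bounded (linf_pos x).
Proof.
move=> x_bd; have := linf_bounded_comb (1 / 2 : R) (1 / 2) (linf_bounded_abs x_bd) x_bd.
by congr linf_bounded; apply: funext => a; rewrite /linf_pos /linf_abs; lra.
Qed.

Lemma linf_neg_bounded x : linf_bounded x -> linf_bounded (linf_neg x).
Proof.
move=> x_bd; have := linf_bounded_comb (1 / 2 : R) (- (1 / 2)) (linf_bounded_abs x_bd) x_bd.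
by congr linf_bounded; apply: funext => a; rewrite /linf_neg /linf_abs; lra.
Qed.

Lemma linf_pos_sub_neg x : x = (fun a => 1 * linf_pos x a + (-1) * linf_neg x a).
Proof. by apply: funext => a; rewrite /linf_pos /linf_neg; lra. Qed.

Lemma linf_pos_add_neg x a : linf_pos x a + linf_neg x a = `|x a|.
Proof. by rewrite /linf_pos /linf_neg; lra. Qed.

Lemma sup_ball_ub (phi : (A -> R) -> R) x :
  linf_bounded x -> (forall a, `|x a| <= 1) -> (`|phi x|%:E <= sup_ball phi)%E.
Proof. by move=> x_bd x_le1; apply: ereal_sup_ubound; exists x. Qed.

Lemma fbl_norm_ub_pair (f : (A -> R) -> R) x y :
  linf_bounded x -> linf_bounded y -> (forall a, `|x a| + `|y a| <= 1) ->
  ((`|f x| + `|f y|)%:E <= fbl_norm f)%E.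
Proof.
move=> x_bd y_bd xy_le1; apply: ereal_sup_ubound.
exists 2%N, (fun k : 'I_2 => if k == ord0 then x else y).
split => //; first by move=> k; case: ifP.
  by move=> a; rewrite big_ord_recr big_ord1 /=; exact: xy_le1.
by rewrite big_ord_recr big_ord1.
Qed.

End Linf.

Section LinearFunctional.
Variables (R : realType) (A : Type) (phi : (A -> R) -> R).
Hypothesis phi_lin : linear_on_linf phi.

Lemma linear_on_linf0 : phi (fun _ => 0) = 0.
Proof.
have := phi_lin 0 0 (linf_bounded0 R A) (linf_bounded0 R A).
by under eq_fun do rewrite mul0r addr0; rewrite !mul0r addr0.
Qed.

Lemma linear_on_linf_sum n (xs : 'I_n -> A -> R) (c : 'I_n -> R) :
  (forall k, linf_bounded (xs k)) ->
  phi (fun a => \sum_(k < n) c k * xs k a) = \sum_(k < n) c k * phi (xs k).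
Proof.
elim: n xs c => [|n IH] xs c xs_bd.
  by under eq_fun do rewrite big_ord0; rewrite big_ord0 linear_on_linf0.
have tail_bd k : linf_bounded (xs (lift ord0 k)) by exact: xs_bd.
rewrite lincomb_ord_recl phi_lin //; last exact: linf_bounded_lincomb.
by rewrite IH // mul1r big_ord_recl.
Qed.

Lemma g_phi_pos_homogeneous : pos_homogeneous (g_phi phi).
Proof.
move=> x l x_bd l_gt0; rewrite /g_phi.
have -> : linf_abs (fun a => l * x a) =
          (fun a => l * linf_abs x a + 0 * linf_abs x a).
  by apply: funext => a; rewrite /linf_abs mul0r addr0 normrM gtr0_norm.
have abs_bd := linf_bounded_abs x_bd.
by rewrite phi_lin // mul0r addr0 normrM gtr0_norm.
Qed.

Lemma g_phi_in_H_plus : in_H_plus (g_phi phi).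
Proof. by split; [exact: g_phi_pos_homogeneous | move=> x _; rewrite /g_phi]. Qed.

Lemma fbl_norm_g_phi_le_sup_ball : (fbl_norm (g_phi phi) <= sup_ball phi)%E.
Proof.
apply: ge_ereal_sup => _ [n [xs [_ xs_bd xs_le1 ->]]].
have abs_bd k : linf_bounded (linf_abs (xs k)) by exact: linf_bounded_abs.
pose sgn k := Num.sg (phi (linf_abs (xs k))).
pose y a := \sum_(k < n) sgn k * linf_abs (xs k) a.
have y_le1 a : `|y a| <= 1.
  apply: le_trans (ler_norm_sum _ _ _) (le_trans _ (xs_le1 a)).
  apply: ler_sum => k _; rewrite normrM /linf_abs normr_id normr_sg.
  by apply: ler_piMl => //; case: eqP.
have -> : \sum_(k < n) `|g_phi phi (xs k)| = phi y.
  rewrite linear_on_linf_sum //.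
  by apply: eq_bigr => k _; rewrite /g_phi normr_id normrEsg.
apply: le_trans (sup_ball_ub phi (linf_bounded_lincomb sgn abs_bd) y_le1).
by rewrite lee_fin ler_norm.
Qed.

Lemma sup_ball_le_fbl_norm_g_phi : (sup_ball phi <= fbl_norm (g_phi phi))%E.
Proof.
apply: ge_ereal_sup => _ [x [x_bd x_le1 ->]].
have [pos_bd neg_bd] := (linf_pos_bounded x_bd, linf_neg_bounded x_bd).
have [pos_ge0 neg_ge0] := (linf_pos_ge0 x, linf_neg_ge0 x).
apply: le_trans (fbl_norm_ub_pair (g_phi phi) pos_bd neg_bd _); last first.
  by move=> a; rewrite !ger0_norm // linf_pos_add_neg.
rewrite /g_phi !linf_abs_id // lee_fin {1}(linf_pos_sub_neg x) phi_lin //.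
by rewrite mul1r mulN1r !normr_id ler_normB.
Qed.

End LinearFunctional.

Theorem lemma4p6 (R : realType) (A : Type) (hA : inhabited A)
  (phi : (A -> R) -> R) (hphi : linear_on_linf phi) :
  in_H_plus (g_phi phi) /\ fbl_norm (g_phi phi) = sup_ball phi.
Proof.
split; first exact: g_phi_in_H_plus.
apply/eqP; rewrite eq_le.
by rewrite fbl_norm_g_phi_le_sup_ball ?sup_ball_le_fbl_norm_g_phi.
Qed.
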